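(* For every nonempty input word $u\in\{0,1,2\}^k$ ($k\ge 1$), the word $\mathcal{T}(u)\cdot\mathcal{T}_{\downarrow}(u)\in\{0,1\}^{k+2}$ satisfies \[ \mathrm{val}_{\mathcal{F}c}(u)=\mathrm{val}_{\mathcal{F}c}\big(\mathcal{T}(u)\cdot\mathcal{T}_{\downarrow}(u)\big). \]
   Context: Fibonacci numbers: $F_0=1$, $F_1=2$, $F_n=F_{n-1}+F_{n-2}$ for all $n\ge2$. For a word $w=w_{k-1}w_{k-2}\cdots w_0$ over $\{0,1,2\}$ (digits indexed from the right, $w_0$ the last letter), $\mathrm{val}_{\mathcal{F}}(w)=\sum_{i=0}^{k-1}w_iF_i$ (so $\mathrm{val}_{\mathcal F}(\varepsilon)=0$), and for nonempty $w$ of length $k$, $\mathrm{val}_{\mathcal{F}c}(w)=\sum_{i=0}^{k-1}w_iF_i-w_{k-1}F_k$. A Mealy machine reads an input word $u=u_0u_1\cdots u_{k-1}$ from left to right starting in its initial state; each transition $p\xrightarrow{a/b}q$ reads input letter $a$, outputs the (possibly empty) word $b$ and moves to state $q$. $M(u)$ denotes the concatenation of the outputs, and $M_{\downarrow}(u)$ denotes the extra output word attached to the state reached after reading $u$. The Berstel adder $\mathcal{B}$ has the 10 states $000.0,\ 001.1,\ 001.2,\ 010.3,\ 010.4,\ 100.5,\ 100.6,\ 101.6,\ 101.7,\ 000.1$, initial state $000.0$, and the 30 transitions (written state: input/output $\to$ next state): $000.0$: $0/0\to000.0$, $1/0\to001.2$, $2/0\to010.4$; $001.2$: $0/0\to010.3$,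 $1/0\to100.5$, $2/0\to101.7$; $010.4$: $0/0\to101.6$, $1/1\to000.0$, $2/1\to001.2$; $010.3$: $0/0\to100.5$, $1/0\to101.7$, $2/1\to000.1$; $100.5$: $0/1\to000.0$, $1/1\to001.2$, $2/1\to010.4$; $101.7$: $0/1\to010.3$, $1/1\to100.5$, $2/1\to101.7$; $101.6$: $0/1\to001.2$, $1/1\to010.4$, $2/1\to100.6$; $000.1$: $0/0\to001.1$, $1/0\to010.3$, $2/0\to100.5$; $100.6$: $0/1\to001.1$, $1/1\to010.3$, $2/1\to100.5$; $001.1$: $0/0\to001.2$, $1/0\to010.4$, $2/0\to100.6$. The extra output word of a state $xyz.j$ is the three-letter binary word $xyz$. The machine $\mathcal{T}$ is obtained from $\mathcal{B}$ by adding a new state $\mathtt{start}$, which becomes the initial state, with the three transitions $\mathtt{start}\xrightarrow{0/\varepsilon}000.0$, $\mathtt{start}\xrightarrow{1/\varepsilon}101.7$, $\mathtt{start}\xrightarrow{2/\varepsilon}100.6$ (empty output), and with extra output word $000$ at $\mathtt{start}$; all other states, transitions and extra outputs are as in $\mathcal{B}$. *)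

From Stdlib Require Import List ZArith.
Import ListNotations.
Open Scope Z_scope.

Inductive letter := L0 | L1 | L2.

Definition lval (a : letter) : Z :=
  match a with L0 => 0 | L1 => 1 | L2 => 2 end.

Fixpoint Fib (n : nat) : Z :=
  match n with
  | O => 1
  | S O => 2
  | S ((S m) as p) => Fib p + Fib m
  end.

(* A list [a; ...] is the word in reading order (leftmost letter first).
   The leftmost letter of a word of length k is w_{k-1}, the last one w_0.
   valF w = sum_{i<k} w_i F_i. *)
Fixpoint valF (w : list letter) : Z :=
  match w with
  | [] => 0
  | a :: w' => lval a * Fib (length w') + valF w'
  end.

Definition valFc (w : list letter) : Z :=
  match w with
  | [] => 0
  | a :: _ => valF w - lval a * Fib (length w)
  end.

(* States of the machine T: the ten states of the Berstel adder plus start. *)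
Inductive state :=
  | S000_0 | S001_1 | S001_2 | S010_3 | S010_4
  | S100_5 | S100_6 | S101_6 | S101_7 | S000_1 | Start.

Definition step (q : state) (a : letter) : list letter * state :=
  match q, a with
  | S000_0, L0 => ([L0], S000_0)
  | S000_0, L1 => ([L0], S001_2)
  | S000_0, L2 => ([L0], S010_4)
  | S001_2, L0 => ([L0], S010_3)
  | S001_2, L1 => ([L0], S100_5)
  | S001_2, L2 => ([L0], S101_7)
  | S010_4, L0 => ([L0], S101_6)
  | S010_4, L1 => ([L1], S000_0)
  | S010_4, L2 => ([L1], S001_2)
  | S010_3, L0 => ([L0], S100_5)
  | S010_3, L1 => ([L0], S101_7)
  | S010_3, L2 => ([L1], S000_1)
  | S100_5, L0 => ([L1], S000_0)
  | S100_5, L1 => ([L1], S001_2)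
  | S100_5, L2 => ([L1], S010_4)
  | S101_7, L0 => ([L1], S010_3)
  | S101_7, L1 => ([L1], S100_5)
  | S101_7, L2 => ([L1], S101_7)
  | S101_6, L0 => ([L1], S001_2)
  | S101_6, L1 => ([L1], S010_4)
  | S101_6, L2 => ([L1], S100_6)
  | S000_1, L0 => ([L0], S001_1)
  | S000_1, L1 => ([L0], S010_3)
  | S000_1, L2 => ([L0], S100_5)
  | S100_6, L0 => ([L1], S001_1)
  | S100_6, L1 => ([L1], S010_3)
  | S100_6, L2 => ([L1], S100_5)
  | S001_1, L0 => ([L0], S001_2)
  | S001_1, L1 => ([L0], S010_4)
  | S001_1, L2 => ([L0], S100_6)
  | Start, L0 => ([], S000_0)
  | Start, L1 => ([], S101_7)
  | Start, L2 => ([], S100_6)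
  end.

Definition extra (q : state) : list letter :=
  match q with
  | S000_0 | S000_1 | Start => [L0; L0; L0]
  | S001_1 | S001_2 => [L0; L0; L1]
  | S010_3 | S010_4 => [L0; L1; L0]
  | S100_5 | S100_6 => [L1; L0; L0]
  | S101_6 | S101_7 => [L1; L0; L1]
  end.

Fixpoint run (q : state) (u : list letter) : list letter * state :=
  match u with
  | [] => ([], q)
  | a :: u' =>
      let (o, q') := step q a in
      let (o', qf) := run q' u' in (o ++ o', qf)
  end.

Definition T_out (u : list letter) : list letter := fst (run Start u).
Definition T_down (u : list letter) : list letter := extra (snd (run Start u)).

(* Reading a word left to right, the pair (valF p, value of p with weights
   shifted down by one index) obeys a Fibonacci Horner rule, and valFc of a
   word with leading letter t is the first component of this evaluation
   started from (-t, -t).  Along a run of the adder, the Horner pair of the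
   input read so far equals that of the output followed by the pending word
   [extra q], up to a correction [carry q] in the second component; this is
   checked transition by transition.  The start transitions set this
   invariant up so that the complement of the input matches the complement
   of the output. *)
From Stdlib Require Import List ZArith Lia.
Import ListNotations.
Open Scope Z_scope.

Definition horner_step (s : Z * Z) (a : letter) : Z * Z :=
  (fst s + snd s + lval a, fst s + lval a).

Definition horner (w : list letter) (s : Z * Z) : Z * Z :=
  fold_left horner_step w s.

(* F_{n-1}, with the convention F_{-1} = 1 (so that F_1 = F_0 + F_{-1}). *)
Definition Fib_pred (n : nat) : Z := match n with O => 1 | S m => Fib m end.

Lemma Fib_S n : Fib (S n) = Fib n + Fib_pred n.
Proof. destruct n as [|[|n]]; reflexivity. Qed.

Fixpoint valF_pred (w : list letter) : Z :=
  match w with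
  | [] => 0
  | a :: w' => lval a * Fib_pred (length w') + valF_pred w'
  end.

Lemma horner_closed_form w x y :
  horner w (x, y) =
  (x * Fib_pred (length w) + y * (Fib (length w) - Fib_pred (length w)) + valF w,
   x * (Fib (length w) - Fib_pred (length w))
     + y * (2 * Fib_pred (length w) - Fib (length w)) + valF_pred w).
Proof.
  revert x y; induction w as [|a w IH]; intros x y; cbn [horner fold_left].
  - cbn; f_equal; ring.
  - fold (horner w (horner_step (x, y) a)); unfold horner_step; cbn [fst snd].
    rewrite IH; cbn [length valF valF_pred]; change (Fib_pred (S (length w)))
      with (Fib (length w)).
    rewrite Fib_S; f_equal; ring.
Qed.

Lemma valFc_horner t w :
  valFc (t :: w) = fst (horner (t :: w) (- lval t, - lval t)).
Proof.
  cbn [horner fold_left]; fold (horner w (horner_step (- lval t, - lval t) t)).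
  unfold horner_step; cbn [fst snd]; rewrite horner_closed_form.
  unfold valFc; cbn [length valF fst]; rewrite Fib_S; ring.
Qed.

(* The carry a state of the adder still owes to the second Horner component
   of its pending output [extra q]. *)
Definition carry (q : state) : Z :=
  match q with
  | S010_4 | S000_1 | S100_6 => 1
  | S101_6 | S001_1 => -1
  | _ => 0
  end.

Definition add_carry (s : Z * Z) (q : state) : Z * Z := (fst s, snd s + carry q).

Definition binary (w : list letter) : Prop := Forall (fun b => b <> L2) w.

Lemma step_adder q a : q <> Start -> exists b q',
  step q a = ([b], q') /\ q' <> Start /\ b <> L2 /\
  forall s, horner_step (add_carry (horner (extra q) s) q) a =
            add_carry (horner (extra q') (horner_step s b)) q'.
Proof.
  intros Hq; destruct q; try congruence; destruct a;
    (do 2 eexists; split; [reflexivity|]; split; [discriminate|];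
     split; [discriminate|]; intros [x y]; unfold add_carry, horner_step;
     cbn; f_equal; ring).
Qed.

Lemma run_adder v q s : q <> Start ->
  horner v (add_carry (horner (extra q) s) q) =
  add_carry (horner (fst (run q v) ++ extra (snd (run q v))) s) (snd (run q v)).
Proof.
  revert q s; induction v as [|a v IH]; intros q s Hq; [reflexivity|].
  destruct (step_adder q a Hq) as (b & q' & Hstep & Hq' & _ & Hinv).
  cbn [horner fold_left run]; rewrite Hstep.
  fold (horner v (horner_step (add_carry (horner (extra q) s) q) a)).
  rewrite Hinv, IH by exact Hq'.
  destruct (run q' v) as [o qf]; reflexivity.
Qed.

Lemma run_length v q : q <> Start -> length (fst (run q v)) = length v.
Proof.
  revert q; induction v as [|a v IH]; intros q Hq; [reflexivity|].
  destruct (step_adder q a Hq) as (b & q' & Hstep & Hq' & _).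
  cbn [run]; rewrite Hstep; specialize (IH q' Hq').
  destruct (run q' v) as [o qf]; cbn in *; congruence.
Qed.

Lemma run_binary v q : q <> Start -> binary (fst (run q v)).
Proof.
  revert q; induction v as [|a v IH]; intros q Hq; [constructor|].
  destruct (step_adder q a Hq) as (b & q' & Hstep & Hq' & Hb & _).
  cbn [run]; rewrite Hstep; specialize (IH q' Hq').
  destruct (run q' v) as [o qf]; constructor; assumption.
Qed.

Lemma extra_binary q : binary (extra q).
Proof. destruct q; repeat constructor; discriminate. Qed.

Lemma length_extra q : length (extra q) = 3%nat.
Proof. destruct q; reflexivity. Qed.

Lemma run_head q b w v :
  extra q = b :: w -> (forall a, fst (step q a) = [b]) ->
  exists w', fst (run q v) ++ extra (snd (run q v)) = b :: w'.
Proof.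
  intros Hextra Hout; destruct v as [|a v]; cbn [run].
  - cbn; rewrite Hextra; eauto.
  - specialize (Hout a); destruct (step q a) as [o q']; cbn in Hout; subst o.
    destruct (run q' v) as [o' qf]; cbn; eauto.
Qed.

Lemma start_step a : exists q b w,
  step Start a = ([], q) /\ q <> Start /\ extra q = b :: w /\
  (forall c, fst (step q c) = [b]) /\
  horner_step (- lval a, - lval a) a =
  add_carry (horner (extra q) (- lval b, - lval b)) q.
Proof.
  destruct a;
    (do 3 eexists; split; [reflexivity|]; split; [discriminate|];
     split; [reflexivity|]; split; [intros []; reflexivity|];
     unfold add_carry; cbn; reflexivity).
Qed.

Theorem mainTheorem1 (u : list letter) :
  u <> [] ->
  length (T_out u ++ T_down u) = (length u + 2)%nat /\
  Forall (fun b => b <> L2) (T_out u ++ T_down u) /\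
  valFc u = valFc (T_out u ++ T_down u).
Proof.
  destruct u as [|a v]; [congruence|]; intros _.
  destruct (start_step a) as (q & b & w & Hstart & Hq & Hextra & Hout & Hinit).
  destruct (run_head q b w v Hextra Hout) as [w' Hhead].
  pose proof (run_adder v q (- lval b, - lval b) Hq) as Hinv.
  pose proof (run_length v q Hq) as Hlen.
  pose proof (run_binary v q Hq) as Hbin.
  unfold T_out, T_down; cbn [run]; rewrite Hstart.
  destruct (run q v) as [o qf]; cbn [fst snd app] in *.
  split; [|split].
  - rewrite length_app, Hlen, length_extra; cbn [length]; lia.
  - apply Forall_app; split; [exact Hbin | apply extra_binary].
  - rewrite Hhead, !valFc_horner, <- Hhead; cbn [horner fold_left].
    fold (horner v (horner_step (- lval a, - lval a) a)).
    rewrite Hinit, Hinv; reflexivity.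
Qed.
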